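(* Let $R$ be the ring of integers of a nonarchimedean local field of characteristic not $2$ in which $2$ is a prime element. (a) If an $R$-lattice $J$ is isotropic, then $\mathbb{H}\perp J$ primitively represents all binary lattices of the form $2^a\mathbb{H}$ for every integer $a\ge0$. (b) If an $R$-lattice $J$ primitively represents $2^{a+1}\epsilon$ for an integer $a\ge0$ and a unit $\epsilon\in R$, then $\mathbb{H}\perp J$ primitively represents the binary lattices $2^a\mathbb{H}$ and $2^a\mathbb{A}$. In particular, $\mathbb{H}^2$ primitively represents $2^a\mathbb{H}$ and $2^a\mathbb{A}$ for every integer $a\ge 0$. Hence, for every $n\ge1$, $\mathbb{H}^n$ primitively represents all even $R$-lattices of rank $n$.
   Context: An $R$-lattice is a finitely generated $R$-submodule of a quadratic space $(V,B)$ over $F$ with $Q(v)=B(v,v)$, assumed integral ($B(L,L)\subseteq R$) and nondegenerate; it is even if $Q(L)\subseteq 2R$, and isotropic if $Q(v)=0$ for some nonzero $v\in L$. $L$ primitively represents $\alpha\in R$ if $\alpha=Q(v)$ for a primitive vector $v$ (one with $Rv$ a direct summand). A representation is an $R$-linear map preserving $B$, primitive if its image is a direct summand. Fix $\rho\in R^\times$ such that $\Delta=1-4\rho$ is a nonsquare unit. For $\alpha\in R$, $\alpha\mathbb{H}$ and $\alpha\mathbb{A}$ are the binary lattices with Gram matrices $\begin{pmatrix}0&\alpha\\\alpha&0\end{pmatrix}$ and $\begin{pmatrix}2\alpha&\alpha\\\alpha&2\rho\alpha\end{pmatrix}$; $\mathbb{H}=1\mathbb{H}$, $\mathbb{A}=1\mathbb{A}$,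 and $\mathbb{H}^n$ is the orthogonal sum of $n$ copies of $\mathbb{H}$. *)

From HB Require Import structures.
From mathcomp Require Import all_boot all_order all_algebra.
Set Implicit Arguments. Unset Strict Implicit. Unset Printing Implicit Defensive.
Import Order.TTheory GRing.Theory Num.Theory.
Local Open Scope ring_scope.

Section Defs.
Variable R : idomainType.

Definition dvd2pow (k : nat) (x : R) : Prop := exists y : R, x = 2 ^+ k * y.

(** R is the ring of integers of a nonarchimedean local field of
    characteristic not 2 in which 2 is a prime element: R is a discrete
    valuation ring with uniformizer 2 (every nonzero element is a unit times
    a power of 2, and 2 is a nonzero nonunit), complete for the 2-adic
    topology, with finite residue field R/2R.  (2 <> 0 forces characteristic
    0 of the fraction field, in particular characteristic not 2.) *)
Record dyadic_local_ring : Prop := DyadicLocalRing {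
  two_neq0 : (2 : R) != 0;
  two_nonunit : (2 : R) \isn't a GRing.unit;
  unit_pow2_factor : forall x : R, x != 0 ->
      exists (k : nat) (u : R), u \is a GRing.unit /\ x = u * 2 ^+ k;
  residue_finite : exists s : seq R, forall x : R,
      exists2 y, y \in s & dvd2pow 1 (x - y);
  complete : forall f : nat -> R, (forall n, dvd2pow n (f n.+1 - f n)) ->
      exists x : R, forall n, dvd2pow n (x - f n)
}.

(** Lattices are given by Gram matrices w.r.t. a basis (lattices over the
    DVR R are free); entries in R = integrality. *)
Definition is_lattice n (G : 'M[R]_n) : Prop := G^T = G /\ \det G != 0.

Definition Qf n (G : 'M[R]_n) (v : 'rV[R]_n) : R := (v *m G *m v^T) 0 0.

Definition is_even n (G : 'M[R]_n) : Prop := forall v, dvd2pow 1 (Qf G v).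

Definition isotropic n (G : 'M[R]_n) : Prop := exists v, v != 0 /\ Qf G v = 0.

Definition rowspan n m (X : 'M[R]_(n, m)) : 'rV[R]_m -> Prop :=
  fun v => exists u : 'rV[R]_n, v = u *m X.

Definition direct_summand m (S : 'rV[R]_m -> Prop) : Prop :=
  exists N : 'rV[R]_m -> Prop,
    [/\ N 0,
        (forall x y, N x -> N y -> N (x + y)),
        (forall (c : R) x, N x -> N (c *: x)),
        (forall v, exists a b, [/\ S a, N b & v = a + b]) &
        (forall v, S v -> N v -> v = 0)].

(** Primitive representation of the lattice with Gram G by the lattice with
    Gram H: a B-preserving linear map (rows of X = images of basis vectors)
    whose image is a direct summand. *)
Definition prim_rep n m (G : 'M[R]_n) (H : 'M[R]_m) : Prop :=
  exists X : 'M[R]_(n, m), X *m H *m X^T = G /\ direct_summand (rowspan X).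

Definition prim_rep_elt m (H : 'M[R]_m) (alpha : R) : Prop :=
  exists v : 'rV[R]_m, Qf H v = alpha /\ direct_summand (rowspan (v : 'M_(1, m))).

Definition osum m n (G : 'M[R]_m) (H : 'M[R]_n) : 'M[R]_(m + n) :=
  block_mx G 0 0 H.

Definition hypmx (alpha : R) : 'M[R]_2 :=
  \matrix_(i < 2, j < 2) (if i == j then 0 else alpha).
Definition anmx (rho alpha : R) : 'M[R]_2 :=
  \matrix_(i < 2, j < 2)
    (if i == j then (if i == 0 :> nat then 2 * alpha else 2 * rho * alpha)
     else alpha).

Fixpoint Hpow (n : nat) : 'M[R]_(n.*2) :=
  match n return 'M[R]_(n.*2) with
  | 0 => 0
  | n'.+1 => osum (hypmx 1) (Hpow n')
  end.

End Defs.

From mathcomp Require Import all_boot all_order all_algebra.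
From mathcomp Require Import ring.
From Stdlib Require Import Classical.
Set Implicit Arguments.
Unset Strict Implicit.
Unset Printing Implicit Defensive.
Import GRing.Theory.
Local Open Scope ring_scope.

(* Everything happens inside H ⊥ J, with hyperbolic basis e, f.  If v in J is
   primitive and isotropic, then e and 2^a f + v span 2^a H.  If v is primitive
   with Q(v) = 2^(a+1) eps, then 2^a e - eps f + v and f span 2^a H; for 2^a A
   replace v by s v, where s is a unit with eps s^2 = 1 mod 2 (squaring is
   injective on the finite residue field R/2R, hence onto), and take a root mu
   of mu = (1 - eps s^2) + rho mu^2, which exists by 2-adic completeness: then
   2^a (1 - mu rho) e + mu f + s v and 2^a rho e + f span 2^a A.  Primitivity is
   always witnessed by a right inverse of the coordinate matrix.  Finally an even
   lattice with Gram matrix [[2y, l^T], [l, L']] embeds primitively in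
   H ⊥ H^(n-1): the first basis vector goes to e + y f, the i-th of the others to
   l_i f plus its image under an embedding of L' given by induction. *)

Section Dvd2pow.
Variable R : idomainType.
Implicit Types x y : R.

Lemma dvd2pow0 n : dvd2pow n (0 : R).
Proof. by exists 0; rewrite mulr0. Qed.

Lemma dvd2powD n x y : dvd2pow n x -> dvd2pow n y -> dvd2pow n (x + y).
Proof. by move=> [a ->] [b ->]; exists (a + b); rewrite mulrDr. Qed.

Lemma dvd2powN n x : dvd2pow n x -> dvd2pow n (- x).
Proof. by move=> [a ->]; exists (- a); rewrite mulrN. Qed.

Lemma dvd2powB n x y : dvd2pow n x -> dvd2pow n y -> dvd2pow n (x - y).
Proof. by move=> dx dy; apply: dvd2powD dx (dvd2powN dy). Qed.

Lemma dvd2powMl n c x : dvd2pow n x -> dvd2pow n (c * x).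
Proof. by move=> [a ->]; exists (c * a); ring. Qed.

Lemma dvd2powMr n c x : dvd2pow n x -> dvd2pow n (x * c).
Proof. by move=> dx; rewrite mulrC; apply: dvd2powMl. Qed.

Lemma dvd2powM m n x y : dvd2pow m x -> dvd2pow n y -> dvd2pow (m + n) (x * y).
Proof. by move=> [a ->] [b ->]; exists (a * b); rewrite exprD; ring. Qed.

Lemma dvd2powS n x : dvd2pow n.+1 x -> dvd2pow n x.
Proof. by move=> [a ->]; exists (2 * a); rewrite exprS; ring. Qed.

Lemma dvd2pow1_mul2 y : dvd2pow 1 (2 * y).
Proof. by exists y. Qed.

End Dvd2pow.

Section DyadicLocalRing.
Variables (R : idomainType) (hR : dyadic_local_ring R).
Implicit Types x y z t u eps rho d : R.

Lemma mul2r_nonunit y : (2 * y) \isn't a GRing.unit.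
Proof. by rewrite unitrM negb_and (two_nonunit hR). Qed.

Lemma dvd2pow_unitM_leq m K u :
  u \is a GRing.unit -> dvd2pow m (u * 2 ^+ K) -> (m <= K)%N.
Proof.
move=> hu [y e]; rewrite leqNgt; apply/negP => ltKm.
have : u = 2 * (2 ^+ (m - K).-1 * y).
  apply: (mulIf (expf_neq0 K (two_neq0 hR))).
  by rewrite e mulrA -exprS prednK ?subn_gt0 // -mulrA (mulrC y) mulrA -exprD subnK 1?ltnW.
by move=> eu; move: hu; rewrite eu (negbTE (mul2r_nonunit _)).
Qed.

Lemma dvd2pow_all_eq0 x : (forall n, dvd2pow n x) -> x = 0.
Proof.
move=> dx; apply/eqP/negPn/negP => /(unit_pow2_factor hR) [K [u [hu eu]]].
by have := dx K.+1; rewrite eu => /(dvd2pow_unitM_leq hu); rewrite ltnn.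
Qed.

Lemma unit_ndvd2 x : ~ dvd2pow 1 x -> x \is a GRing.unit.
Proof.
move=> ndx; have x0 : x != 0 by apply/eqP => x0; apply: ndx; rewrite x0; apply: dvd2pow0.
have [[|K] [u [hu ex]]] := unit_pow2_factor hR x0.
- by rewrite ex mulr1.
- by case: ndx; exists (u * 2 ^+ K); rewrite ex expr1 exprS; ring.
Qed.

Lemma dvd2_sqr z : dvd2pow 1 (z ^+ 2) -> dvd2pow 1 z.
Proof.
move=> [w ew]; apply: NNPP => /unit_ndvd2 /(unitrX 2).
by rewrite ew expr1; apply/negP/mul2r_nonunit.
Qed.

Lemma dvd2_expB k x y : dvd2pow 1 (x ^+ (2 ^ k) - y ^+ (2 ^ k)) -> dvd2pow 1 (x - y).
Proof.
elim: k x y => [|k IH] x y; first by rewrite !expr1.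
rewrite expnS !exprM => /IH dxy; apply: dvd2_sqr.
have -> : (x - y) ^+ 2 = (x ^+ 2 - y ^+ 2) - 2 * (y * (x - y)) by ring.
by apply: dvd2powB dxy (dvd2pow1_mul2 _).
Qed.

Lemma sqr_mod2 t : exists y, dvd2pow 1 (t - y ^+ 2).
Proof.
have [s s_res] := residue_finite hR.
have /fin_all_exists [f tf] : forall k : 'I_(size s).+1, exists j : 'I_(size s),
    dvd2pow 1 (t ^+ (2 ^ k) - s`_j).
  move=> k; have [y ys ty] := s_res (t ^+ (2 ^ k)).
  by exists (Ordinal (etrans (index_mem y s) ys)); rewrite /= nth_index.
have /injectivePn [k [l neq_kl fkl]] : ~~ injectiveb f.
  by apply/injectiveP => /leq_card; rewrite !card_ord ltnn.
wlog lt_kl : k l neq_kl fkl / (k < l)%N.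
  move=> hwlog; case: (ltngtP k l) => [||/val_inj eq_kl]; first exact: hwlog.
    by apply: hwlog; rewrite 1?eq_sym.
  by move: neq_kl; rewrite eq_kl eqxx.
have : dvd2pow 1 (t ^+ (2 ^ k) - (t ^+ (2 ^ (l - k))) ^+ (2 ^ k)).
  rewrite -exprM -expnD subnK 1?ltnW //.
  have -> : t ^+ (2 ^ k) - t ^+ (2 ^ l) =
    (t ^+ (2 ^ k) - s`_(f k)) - (t ^+ (2 ^ l) - s`_(f l)) by rewrite fkl; ring.
  exact: dvd2powB.
move/dvd2_expB => dt; exists (t ^+ (2 ^ (l - k).-1)).
by rewrite -exprM -expnSr prednK // subn_gt0.
Qed.

Lemma unit_sqr_mod2 eps : eps \is a GRing.unit ->
  exists s, s \is a GRing.unit /\ dvd2pow 1 (1 - eps * s ^+ 2).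
Proof.
move=> ueps; have [s ds] := sqr_mod2 eps^-1.
have d1 : dvd2pow 1 (1 - eps * s ^+ 2).
  by rewrite -(mulrV ueps) -mulrBr; apply: dvd2powMl.
exists s; split=> //.
suff : eps * s ^+ 2 \is a GRing.unit by rewrite unitrM unitrX_pos // => /andP[].
apply: unit_ndvd2 => d2; move: (two_nonunit hR).
have [w] := dvd2powD d1 d2; rewrite subrK expr1 => e1.
by apply/negP/negPn/unitrPr; exists w.
Qed.

Lemma quadratic_fixpoint rho d : dvd2pow 1 d -> exists mu, mu = d + rho * mu ^+ 2.
Proof.
move=> dd; pose f := fix f n := if n is m.+1 then d + rho * f m ^+ 2 else 0.
have f_even n : dvd2pow 1 (f n).
  elim: n => [|n IH] /=; first exact: dvd2pow0.
  by apply: dvd2powD dd _; rewrite expr2; apply/dvd2powMl/dvd2powMl.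
have f_cauchy n : dvd2pow n.+1 (f n.+1 - f n).
  elim: n => [|n IH]; first by rewrite subr0; apply: f_even.
  have -> : f n.+2 - f n.+1 = rho * ((f n.+1 - f n) * (f n.+1 + f n)) by rewrite /=; ring.
  by apply: dvd2powMl; rewrite -addn1; apply: dvd2powM IH (dvd2powD _ _).
have [mu f_mu] := complete hR (fun n => dvd2powS (f_cauchy n)).
exists mu; apply/eqP; rewrite -subr_eq0; apply/eqP/dvd2pow_all_eq0 => n.
have -> : mu - (d + rho * mu ^+ 2) = (mu - f n.+1) + rho * ((f n - mu) * (f n + mu)).
  by rewrite /=; ring.
apply: dvd2powD (dvd2powS (f_mu n.+1)) _.
by apply/dvd2powMl/dvd2powMr; rewrite -opprB; apply/dvd2powN.
Qed.

Lemma row_pow2_unit_factor k (v : 'rV[R]_k) : v != 0 ->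
  exists m (w : 'rV[R]_k) i, v = 2 ^+ m *: w /\ w 0 i \is a GRing.unit.
Proof.
move=> /rV0Pn [i vi0]; have [K [u [hu ev]]] := unit_pow2_factor hR vi0.
pose P m := forall j, dvd2pow m (v 0 j).
have [m [Pm nPm]] : exists m, P m /\ ~ P m.+1.
  have : ~ P K.+1 by move/(_ i); rewrite ev => /(dvd2pow_unitM_leq hu); rewrite ltnn.
  have : P 0 by move=> j; exists (v 0 j); rewrite mul1r.
  elim: K {ev} => [|K IH] P0 nPK; first by exists 0%N.
  by case: (classic (P K.+1)) => [PK | /(IH P0) //]; exists K.+1.
have /fin_all_exists [w ew] := Pm.
exists m, (\row_j w j); have [j /unit_ndvd2 uj] : exists j, ~ dvd2pow 1 (w j).
  apply: NNPP => /not_ex_all_not dw; apply: nPm => j; rewrite ew.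
  by have /NNPP [y ->] := dw j; exists y; rewrite mulrA -exprD addn1.
exists j; split; last by rewrite mxE.
by apply/matrixP => a b; rewrite !mxE ord1 ew.
Qed.

End DyadicLocalRing.

Lemma unitr_neq0 (R : unitRingType) (x : R) : x \is a GRing.unit -> x != 0.
Proof. by apply: contraTneq => ->; rewrite unitr0. Qed.

Section PrimitiveRepresentations.
Variable R : idomainType.

Lemma direct_summand_rowspan_rinv n m (X : 'M[R]_(n, m)) (C : 'M[R]_(m, n)) :
  X *m C = 1%:M -> direct_summand (rowspan X).
Proof.
move=> XC; exists (fun w => w *m C = 0); split.
- by rewrite mul0mx.
- by move=> x y xC yC; rewrite mulmxDl xC yC addr0.
- by move=> c x xC; rewrite -scalemxAl xC scaler0.
- move=> v; exists (v *m C *m X), (v - v *m C *m X); split.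
  + by exists (v *m C).
  + by rewrite mulmxBl -!mulmxA XC mulmx1 subrr.
  + by rewrite addrC subrK.
- by move=> _ [u ->]; rewrite -mulmxA XC mulmx1 => ->; rewrite mul0mx.
Qed.

Lemma prim_rep_rinv n m (G : 'M[R]_n) (H : 'M[R]_m) X C :
  X *m H *m X^T = G -> X *m C = 1%:M -> prim_rep G H.
Proof. by move=> XHX XC; exists X; split=> //; apply: direct_summand_rowspan_rinv XC. Qed.

Lemma rinv_direct_summand_row k (v : 'rV[R]_k) :
  v != 0 -> direct_summand (rowspan v) -> exists c : 'cV[R]_k, v *m c = 1%:M.
Proof.
move=> v0 [N [N0 ND NZ Ndec Nint]].
have /fin_all_exists [ub hub] : forall j : 'I_k, exists ub : 'M[R]_1 * 'rV[R]_k,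
    N ub.2 /\ delta_mx 0 j = ub.1 *m v + ub.2.
  by move=> j; have [_ [b [[u ->] Nb e]]] := Ndec (delta_mx 0 j); exists (u, b).
pose c : 'cV[R]_k := \col_j (ub j).1 0 0.
exists c; rewrite [v *m c]mx11_scalar; congr _%:M; set g := (v *m c) 0 0.
have Nrest : N (\sum_j v 0 j *: (ub j).2).
  by apply: (big_ind N) => // j _; apply/NZ; case: (hub j).
have ev : v = g *: v + \sum_j v 0 j *: (ub j).2.
  rewrite {1}[v]row_sum_delta.
  under eq_bigr => j _ do rewrite (proj2 (hub j)) scalerDr [(ub j).1]mx11_scalar
    mul_scalar_mx scalerA.
  rewrite big_split /= -scaler_suml /g !mxE; congr (_ *: _ + _).
  by apply: eq_bigr => j _; rewrite mxE.
have : (1 - g) *: v = 0.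
  apply: Nint; first by exists (1 - g)%:M; rewrite mul_scalar_mx.
  by rewrite scalerBl scale1r {1}ev addrC addKr.
by move/eqP; rewrite scalemx_eq0 (negbTE v0) orbF subr_eq0 => /eqP.
Qed.

Lemma prim_rep_elt_rinv k (J : 'M[R]_k) alpha : alpha != 0 -> prim_rep_elt J alpha ->
  exists v (c : 'cV[R]_k), Qf J v = alpha /\ v *m c = 1%:M.
Proof.
move=> alpha0 [v [Qv ds]]; have v0 : v != 0.
  by apply: contra_neq alpha0 => v0; rewrite -Qv v0 /Qf !mul0mx mxE.
by have [c vc] := rinv_direct_summand_row v0 ds; exists v, c.
Qed.

Lemma unit_coord_rinv k (v : 'rV[R]_k) i :
  v 0 i \is a GRing.unit -> exists c : 'cV[R]_k, v *m c = 1%:M.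
Proof.
move=> ui; exists ((v 0 i)^-1 *: delta_mx i 0).
rewrite -scalemxAr -colE; apply/matrixP => a b; rewrite !ord1 !mxE /= mulr1n.
by rewrite mulVr.
Qed.

Lemma QfZ k (J : 'M[R]_k) (c : R) v : Qf J (c *: v) = c ^+ 2 * Qf J v.
Proof. by rewrite /Qf linearZ /= -scalemxAl -scalemxAr -scalemxAl !mxE; ring. Qed.

End PrimitiveRepresentations.

Ltac expand_mx :=
  repeat (rewrite mxE || rewrite big_ord_recl || rewrite big_ord0); rewrite /=.

Ltac mx22_entries := apply/matrixP; case=> [[|[|//]]] ?; case=> [[|[|//]]] ?; expand_mx.

Section HyperbolicPlane.
Variable R : idomainType.

Definition mx22 (a b c d : R) : 'M[R]_2 :=
  \matrix_(i < 2, j < 2) if val i == 0%N then (if val j == 0%N then a else b)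
                         else (if val j == 0%N then c else d).
Definition col2 (a b : R) : 'cV[R]_2 := \col_(i < 2) if val i == 0%N then a else b.
Definition row2 (a b : R) : 'rV[R]_2 := \row_(i < 2) if val i == 0%N then a else b.

Lemma hyp_form (a b c d : R) : row2 a b *m hypmx 1 *m (row2 c d)^T = (a * d + b * c)%:M.
Proof. by apply/matrixP => i j; rewrite !ord1; expand_mx; ring. Qed.

Lemma row2_mul_col2 (a b c d : R) : row2 a b *m col2 c d = (a * c + b * d)%:M.
Proof. by apply/matrixP => i j; rewrite !ord1; expand_mx; ring. Qed.

Lemma prim_rep_osum_hyp k (J : 'M[R]_k) (v : 'rV[R]_k) (c : 'cV[R]_k)
    (G X1 C1 : 'M[R]_2) (w : 'cV[R]_2) (d : 'rV[R]_2) :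
  v *m c = 1%:M ->
  X1 *m hypmx 1 *m X1^T + Qf J v *: (w *m w^T) = G ->
  X1 *m C1 + w *m d = 1%:M ->
  prim_rep G (osum (hypmx 1) J).
Proof.
move=> vc XHX XC; apply: (prim_rep_rinv (X := row_mx X1 (w *m v)) (C := col_mx C1 (c *m d))).
  rewrite -XHX /osum mul_row_block ?mul0mx ?mulmx0 ?addr0 ?add0r tr_row_mx mul_row_col.
  congr (_ + _); rewrite trmx_mul !mulmxA -!(mulmxA w) [v *m J *m v^T]mx11_scalar.
  by rewrite mul_scalar_mx scalemxAr.
by rewrite mul_row_col !mulmxA -(mulmxA w) vc mulmx1.
Qed.

Lemma prim_rep_elt_hyp_even (x : R) : prim_rep_elt (hypmx 1) (2 * x).
Proof.
exists (row2 1 x); split.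
  by rewrite /Qf hyp_form !mxE /=; ring.
apply: (direct_summand_rowspan_rinv (C := col2 1 0)).
by rewrite row2_mul_col2 mulr1 mulr0 addr0.
Qed.

Lemma Hpow_rinv_rep_even n (L : 'M[R]_n) : L^T = L -> (forall i, dvd2pow 1 (L i i)) ->
  exists X C, X *m Hpow R n *m X^T = L /\ X *m C = 1%:M.
Proof.
elim: n L => [|n IH] L symL evenL.
  by exists 0, 0; split; apply/matrixP => -[].
pose L1 : 'M[R]_(1 + n) := L.
have [X' [C' [X'H X'C]]] : exists X C, X *m Hpow R n *m X^T = drsubmx L1 /\ X *m C = 1%:M.
  apply: IH => [|i]; first by rewrite trmx_drsub symL.
  by rewrite !mxE; apply: evenL.
have [y Ly] := evenL (@lshift 1 n ord0).
pose X : 'M_(1 + n, 2 + n.*2) := block_mx (row2 1 y) 0 (dlsubmx L1 *m row2 0 1) X'.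
pose C : 'M_(2 + n.*2, 1 + n) := block_mx (col2 1 0) 0 0 C'.
suff [XH XC] : X *m osum (hypmx 1) (Hpow R n) *m X^T = L1 /\ X *m C = 1%:M by exists X, C.
split.
- rewrite /X /osum tr_block_mx !mulmx_block !trmx0 !(mul0mx, mulmx0, addr0, add0r).
  rewrite -[RHS]/L1 -[L1 in RHS]submxK; congr block_mx.
  + by rewrite hyp_form; apply/matrixP => i j; rewrite !ord1 !mxE Ly /=; ring.
  + by rewrite trmx_mul mulmxA hyp_form mulr0 mulr1 addr0 mul1mx trmx_dlsub symL.
  + by rewrite -!mulmxA (mulmxA (row2 0 1)) hyp_form mul0r add0r mulr1 mulmx1.
  + have f_isotropic : row2 0 1 *m hypmx 1 *m (row2 0 1)^T = 0%:M :> 'M[R]_1.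
      by rewrite hyp_form mul0r mulr0 addr0.
    rewrite trmx_mul !mulmxA -2!(mulmxA (dlsubmx L1)) f_isotropic.
    by rewrite mul_mx_scalar scale0r mul0mx add0r X'H.
- rewrite /X /C mulmx_block !(mul0mx, mulmx0, addr0, add0r) X'C -mulmxA !row2_mul_col2.
  by rewrite !mulr0 !mulr1 addr0 add0r mul_mx_scalar scale0r -scalar_mx_block.
Qed.

Lemma prim_rep_Hpow_even n (L : 'M[R]_n) : L^T = L -> is_even L -> prim_rep L (Hpow R n).
Proof.
move=> symL evenL; have [|X [C [XH XC]]] := Hpow_rinv_rep_even symL.
  by move=> i; have := evenL (delta_mx 0 i); rewrite /Qf trmx_delta -rowE -colE !mxE.
exact: prim_rep_rinv XH XC.
Qed.

End HyperbolicPlane.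

Section LatticeRepresentations.
Variables (R : idomainType) (hR : dyadic_local_ring R).

Lemma prim_rep_hyp_isotropic k (J : 'M[R]_k) a :
  isotropic J -> prim_rep (hypmx (2 ^+ a)) (osum (hypmx 1) J).
Proof.
move=> [v [v0 Qv]]; have [m [w [i [ev uwi]]]] := row_pow2_unit_factor hR v0.
have Qw : Qf J w = 0.
  move/eqP: Qv; rewrite ev QfZ mulf_eq0 -exprM expf_eq0 (negbTE (two_neq0 hR)) andbF.
  by move/eqP.
have [c wc] := unit_coord_rinv uwi.
apply: (prim_rep_osum_hyp (X1 := mx22 1 0 0 (2 ^+ a)) (C1 := mx22 1 0 0 0)
  (w := col2 0 1) (d := row2 0 1) wc).
  by rewrite Qw scale0r addr0; mx22_entries; ring.
by mx22_entries; ring.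
Qed.

Lemma prim_rep_hyp_prim_rep_elt k (J : 'M[R]_k) a eps : eps != 0 ->
  prim_rep_elt J (2 ^+ a.+1 * eps) -> prim_rep (hypmx (2 ^+ a)) (osum (hypmx 1) J).
Proof.
move=> eps0 /prim_rep_elt_rinv [|v [c [Qv vc]]].
  by rewrite mulf_neq0 // expf_neq0 // two_neq0.
apply: (prim_rep_osum_hyp (X1 := mx22 (2 ^+ a) (- eps) 0 1) (C1 := mx22 0 0 0 1)
  (w := col2 1 0) (d := row2 1 eps) vc).
  by rewrite Qv exprS; mx22_entries; ring.
by mx22_entries; ring.
Qed.

Lemma prim_rep_an_prim_rep_elt rho k (J : 'M[R]_k) a eps : eps \is a GRing.unit ->
  prim_rep_elt J (2 ^+ a.+1 * eps) -> prim_rep (anmx rho (2 ^+ a)) (osum (hypmx 1) J).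
Proof.
move=> ueps /prim_rep_elt_rinv [|v [c [Qv vc]]].
  by rewrite mulf_neq0 ?expf_neq0 ?two_neq0 ?unitr_neq0.
have [s [us ds]] := unit_sqr_mod2 hR ueps.
have [mu emu] := quadratic_fixpoint hR rho ds.
have sc : (s *: v) *m (s^-1 *: c) = 1%:M.
  by rewrite -scalemxAl -scalemxAr vc scalerA mulrV // scale1r.
apply: (prim_rep_osum_hyp (X1 := mx22 (2 ^+ a * (1 - mu * rho)) mu (rho * 2 ^+ a) 1)
  (C1 := mx22 0 0 0 1) (w := col2 1 0) (d := row2 1 (- mu)) sc).
  have -> : Qf J (s *: v) = 2 ^+ a.+1 * (1 - mu + rho * mu ^+ 2).
    by rewrite QfZ Qv {1}emu; ring.
  by rewrite exprS; mx22_entries; ring.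
by mx22_entries; ring.
Qed.

End LatticeRepresentations.

Theorem lemma4p1 (R : idomainType) (hR : dyadic_local_ring R)
  (rho : R) (hrho : rho \is a GRing.unit)
  (hDelta : (1 - 4 * rho) \is a GRing.unit /\ ~ exists y : R, y ^+ 2 = 1 - 4 * rho) :
  (* (a) *)
  (forall (k : nat) (J : 'M[R]_k), is_lattice J -> isotropic J ->
     forall a : nat, prim_rep (hypmx (2 ^+ a : R)) (osum (hypmx (1 : R)) J)) /\
  (* (b) *)
  (forall (k : nat) (J : 'M[R]_k) (a : nat) (eps : R), is_lattice J ->
     eps \is a GRing.unit -> prim_rep_elt J (2 ^+ a.+1 * eps) ->
     prim_rep (hypmx (2 ^+ a : R)) (osum (hypmx (1 : R)) J) /\
     prim_rep (anmx rho (2 ^+ a : R)) (osum (hypmx (1 : R)) J)) /\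
  (* in particular *)
  (forall a : nat,
     prim_rep (hypmx (2 ^+ a : R)) (osum (hypmx (1 : R)) (hypmx (1 : R))) /\
     prim_rep (anmx rho (2 ^+ a : R)) (osum (hypmx (1 : R)) (hypmx (1 : R)))) /\
  (* hence *)
  (forall (n : nat) (L : 'M[R]_n), (1 <= n)%N -> is_lattice L -> is_even L ->
     prim_rep L (Hpow R n)).
Proof.
have hyp_even a : prim_rep_elt (hypmx (1 : R)) (2 ^+ a.+1 * 1).
  by rewrite mulr1 exprS; apply: prim_rep_elt_hyp_even.
split; [|split; [|split]].
- by move=> k J _ isoJ a; apply: prim_rep_hyp_isotropic.
- move=> k J a eps _ ueps Jrep; split.
    exact: prim_rep_hyp_prim_rep_elt (unitr_neq0 ueps) Jrep.
  exact: prim_rep_an_prim_rep_elt ueps Jrep.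
- move=> a; split.
    exact: prim_rep_hyp_prim_rep_elt (oner_neq0 R) (hyp_even a).
  exact: prim_rep_an_prim_rep_elt (unitr1 R) (hyp_even a).
- by move=> n L _ [symL _] evenL; apply: prim_rep_Hpow_even.
Qed.
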